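(* Fix $k\ge 2$, $\epsilon>0$ and a graphlet $\mathsf{G}$ on $k$ vertices. For a graph $G$ on $n$ nodes, the number of pairs $(\mathcal{W},\mathcal{W}')\in\mathcal{D}\times\mathcal{D}$ such that $\mathrm{Cov}\big(\tilde W(\mathcal{W},\mathsf{G}),\tilde W(\mathcal{W}',\mathsf{G})\big)>0$ is $O(n^{2k-2})$ (with the implied constant depending only on $k$).
   Context: Let $G=(V,E)$ be a simple undirected graph with $V=\{v_1,\dots,v_n\}$, $a_{i,j}=1$ iff $\{v_i,v_j\}\in E$. A graphlet is a simple graph $\mathsf{G}=(\mathsf{V},\mathsf{E})$, $\mathsf{V}=\{u_1,\dots,u_k\}$. Independently for each ordered pair $(i,j)$, $i\ne j$, let $\tilde a_{i,j}$ be a bit with $\Pr[\tilde a_{i,j}=1]=e^{\epsilon}/(1+e^{\epsilon})$ if $a_{i,j}=1$ and $1/(1+e^{\epsilon})$ if $a_{i,j}=0$, and set $\hat a_{i,j}=\frac{e^{\epsilon}+1}{e^{\epsilon}-1}\tilde a_{i,j}-\frac{1}{e^{\epsilon}-1}$. $\mathcal{D}$ is the set of tuples $\mathcal{W}=(v_{\ell_1},\dots,v_{\ell_k})\in V^k$ of pairwise distinct nodes, and $\tilde W(\mathcal{W},\mathsf{G})=\prod_{\{u_i,u_j\}\in\mathsf{E},\,i<j}\hat a_{\ell_i,\ell_j}$. *)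

From HB Require Import structures.
From mathcomp Require Import all_boot all_order all_algebra.
From mathcomp Require Import reals sequences.
Set Implicit Arguments. Unset Strict Implicit. Unset Printing Implicit Defensive.
Import Order.TTheory GRing.Theory Num.Theory.
Local Open Scope ring_scope.

Section RR.
Variables (R : realType) (eps : R) (n : nat) (G : rel 'I_n).

Definition outcome := {ffun 'I_n * 'I_n -> bool}.

(* Pr[tilde a = b] given the true bit a *)
Definition rr_prob (a b : bool) : R :=
  let e := expR eps in
  if a == b then e / (1 + e) else 1 / (1 + e).

(* probability of an outcome: independent bits; the true bit of (i,j) is G i j
   (diagonal bits are also drawn, with G i i = false, but never used) *)
Definition weight (w : outcome) : R :=
  \prod_(p : 'I_n * 'I_n) rr_prob (G p.1 p.2) (w p).

Definition Exp (X : outcome -> R) : R := \sum_(w : outcome) weight w * X w.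

Definition Cov (X Y : outcome -> R) : R :=
  Exp (fun w => X w * Y w) - Exp X * Exp Y.

Definition ahat (w : outcome) (i j : 'I_n) : R :=
  let e := expR eps in
  (e + 1) / (e - 1) * (w (i, j))%:R - 1 / (e - 1).

Definition Wtilde (k : nat) (g : rel 'I_k) (W : {ffun 'I_k -> 'I_n})
  (w : outcome) : R :=
  \prod_(i : 'I_k) \prod_(j : 'I_k | (i < j)%N && g i j) ahat w (W i) (W j).

Definition num_pos_cov (k : nat) (g : rel 'I_k) : nat :=
  #|[set WW : {ffun 'I_k -> 'I_n} * {ffun 'I_k -> 'I_n} |
      [&& injectiveb WW.1, injectiveb WW.2 &
          0 < Cov (Wtilde g WW.1) (Wtilde g WW.2)]]|.
End RR.

From HB Require Import structures.
From mathcomp Require Import all_boot all_order all_algebra.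
From mathcomp Require Import reals sequences exp boolp.
From mathcomp Require Import ring.
Set Implicit Arguments. Unset Strict Implicit. Unset Printing Implicit Defensive.
Import Order.TTheory GRing.Theory Num.Theory.
Local Open Scope ring_scope.

(* The estimator [Wtilde W] is a product, over ordered node pairs p, of factors
   each depending only on the independent bit of p. If no graphlet edge of W is
   mapped onto the same ordered pair as a graphlet edge of W', the two products
   depend on disjoint sets of independent bits and their covariance vanishes.
   Hence a pair with positive covariance has edges (i,j), (i',j') of the
   graphlet with W i = W' i' and W j = W' j'; for each of the k^4 choices of
   (i,j,i',j') there are n^k choices of W and n^(k-2) of W'. *)

Section Independence.
Variables (R : realType) (eps : R) (n : nat) (G : rel 'I_n).

Lemma rr_prob_sum1 (a : bool) : \sum_(b : bool) rr_prob eps a b = 1.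
Proof.
have nz_den : 1 + expR eps != 0 by rewrite lt0r_neq0 // addr_gt0 ?expR_gt0.
by rewrite big_bool /rr_prob; case: a => /=; field.
Qed.

Lemma Exp_prod_coord (F : 'I_n * 'I_n -> bool -> R) :
  Exp eps G (fun w => \prod_p F p (w p)) =
  \prod_p \sum_b rr_prob eps (G p.1 p.2) b * F p b.
Proof.
rewrite bigA_distr_bigA /Exp /weight; apply: eq_bigr => w _.
by rewrite -big_split.
Qed.

Lemma Cov_prod_coord_eq0 (F H : 'I_n * 'I_n -> bool -> R) :
  (forall p, F p =1 (fun=> 1) \/ H p =1 (fun=> 1)) ->
  Cov eps G (fun w => \prod_p F p (w p)) (fun w => \prod_p H p (w p)) = 0.
Proof.
move=> disjoint_FH; apply/eqP; rewrite subr_eq0; apply/eqP.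
under eq_fun do rewrite -big_split /=.
rewrite (Exp_prod_coord (fun p b => F p b * H p b)) !Exp_prod_coord -big_split /=.
apply: eq_bigr => p _.
have [F1 | H1] := disjoint_FH p.
- under eq_bigr do rewrite F1 mul1r.
  by under [X in _ = X * _]eq_bigr do rewrite F1 mulr1; rewrite rr_prob_sum1 mul1r.
- under eq_bigr do rewrite H1 mulr1.
  by under [X in _ = _ * X]eq_bigr do rewrite H1 mulr1; rewrite rr_prob_sum1 mulr1.
Qed.

End Independence.

Section GraphletProduct.
Variables (R : realType) (eps : R) (n k : nat) (g : rel 'I_k).

Definition ahat_bit (b : bool) : R :=
  (expR eps + 1) / (expR eps - 1) * b%:R - 1 / (expR eps - 1).

Definition Wtilde_factor (W : {ffun 'I_k -> 'I_n}) (p : 'I_n * 'I_n) (b : bool) : R :=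
  \prod_(i : 'I_k) \prod_(j : 'I_k)
     (if [&& (i < j)%N, g i j & (W i, W j) == p] then ahat_bit b else 1).

Lemma Wtilde_prod_coord W w : Wtilde eps g W w = \prod_p Wtilde_factor W p (w p).
Proof.
rewrite /Wtilde /Wtilde_factor exchange_big /=; apply: eq_bigr => i _.
rewrite exchange_big /= big_mkcond /=; apply: eq_bigr => j _.
case: ifP => edge_ij; last by rewrite big1 // => p _; rewrite andbA edge_ij.
rewrite (bigD1 (W i, W j)) //= andbA edge_ij eqxx big1 ?mulr1 // => p.
by rewrite eq_sym => /negbTE ->; rewrite !andbF.
Qed.

Definition share_edge (W W' : {ffun 'I_k -> 'I_n}) : bool :=
  [exists i : 'I_k, exists j : 'I_k, exists i' : 'I_k, exists j' : 'I_k,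
     [&& (i < j)%N, g i j, (i' < j')%N, g i' j', W i == W' i' & W j == W' j']].

Lemma Cov_Wtilde_eq0 (G : rel 'I_n) (W W' : {ffun 'I_k -> 'I_n}) :
  ~~ share_edge W W' -> Cov eps G (Wtilde eps g W) (Wtilde eps g W') = 0.
Proof.
move=> no_share.
rewrite (funext (Wtilde_prod_coord W)) (funext (Wtilde_prod_coord W')).
apply: Cov_prod_coord_eq0 => p.
have [/existsP[i /existsP[j /and3P[lt_ij g_ij /eqP Wij]]] | not_hit] :=
  boolP [exists i : 'I_k, exists j : 'I_k, [&& (i < j)%N, g i j & (W i, W j) == p]].
- right=> b; apply: big1 => i' _; apply: big1 => j' _.
  case: ifP => // /and3P[lt_ij' g_ij' /eqP W'ij']; case/negP: no_share.
  apply/existsP; exists i; apply/existsP; exists j.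
  apply/existsP; exists i'; apply/existsP; exists j'.
  by move: Wij; rewrite lt_ij g_ij lt_ij' g_ij' -W'ij' => -[-> ->]; rewrite !eqxx.
- left=> b; apply: big1 => i _; apply: big1 => j _.
  case: ifP => // hit; case/negP: not_hit.
  by apply/existsP; exists i; apply/existsP; exists j.
Qed.

End GraphletProduct.

Section Counting.
Local Open Scope nat_scope.

Lemma card_le_sum_card (T I : finType) (A : {pred T}) (P : I -> pred T) :
  (forall x, x \in A -> exists i, P i x) -> #|A| <= \sum_i #|P i|.
Proof.
move=> cover; rewrite -sum1_card big_mkcond /=.
under [X in _ <= X]eq_bigr do rewrite -sum1_card big_mkcond /=.
rewrite exchange_big /=; apply: leq_sum => x _.
case: ifP => // /cover [i Pix].
by rewrite (bigD1 i) //= unfold_in Pix leq_addr.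
Qed.

Lemma card_ffun_fix2 (k n : nat) (i j : 'I_k) (a b : 'I_n) : i != j ->
  #|[pred W : {ffun 'I_k -> 'I_n} | (W i == a) && (W j == b)]| = n ^ (k - 2).
Proof.
move=> neq_ij.
pose F (x : 'I_k) := if x == i then pred1 a else if x == j then pred1 b else predT.
have -> : #|[pred W : {ffun 'I_k -> 'I_n} | (W i == a) && (W j == b)]| = #|family F|.
  apply: eq_card => W; rewrite !inE; apply/andP/familyP => [[/eqP Wi /eqP Wj] x|WF].
    rewrite /F; case: ifP => [/eqP -> | _]; first by rewrite inE Wi.
    by case: ifP => [/eqP -> | _]; rewrite ?inE ?Wj.
  by move: (WF i) (WF j); rewrite /F eqxx eq_sym (negbTE neq_ij) eqxx.
rewrite card_family foldrE big_image /= (bigID (mem [set i; j])) /=.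
rewrite big1 => [|x]; last first.
  by rewrite !inE /F eq_sym => /orP[] /eqP ->; rewrite ?eqxx ?(negbTE neq_ij); exact: card1.
rewrite mul1n (eq_bigr (fun _ => n)) => [|x]; last first.
  by rewrite !inE /F negb_or => /andP[/negbTE -> /negbTE ->]; rewrite card_ord.
rewrite prod_nat_const; congr (_ ^ _).
rewrite (eq_card (B := ~: [set i; j])) => [|x]; last by rewrite inE.
by rewrite cardsCs setCK cards2 neq_ij card_ord.
Qed.

Lemma card_ffun_pairs_agree2 (k n : nat) (i j i' j' : 'I_k) : i' != j' ->
  #|[pred WW : {ffun 'I_k -> 'I_n} * {ffun 'I_k -> 'I_n} |
      (WW.1 i == WW.2 i') && (WW.1 j == WW.2 j')]| = n ^ k * n ^ (k - 2).
Proof.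
move=> neq_ij'; rewrite -sum1_card big_mkcond /=.
rewrite -(pair_bigA _ (fun W1 W2 : {ffun 'I_k -> 'I_n} =>
  if (W1 i == W2 i') && (W1 j == W2 j') then 1 else 0)) /=.
under eq_bigr => W1 _.
  under eq_bigr do rewrite (eq_sym (W1 i)) (eq_sym (W1 j)).
  rewrite -big_mkcond sum1_card card_ffun_fix2 //; over.
by rewrite sum_nat_const card_ffun !card_ord.
Qed.

End Counting.

Theorem lemma3 (k : nat) : (2 <= k)%N ->
  exists C : nat,
    forall (R : realType) (eps : R), 0 < eps ->
    forall (g : rel 'I_k), symmetric g -> irreflexive g ->
    forall (n : nat) (G : rel 'I_n), symmetric G -> irreflexive G ->
      (num_pos_cov eps G g <= C * n ^ (2 * k - 2))%N.
Proof.
move=> k_ge2; exists (k ^ 4)%N => R eps _ g _ _ n G _ _.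
pose agree (q : ('I_k * 'I_k) * ('I_k * 'I_k))
           (WW : {ffun 'I_k -> 'I_n} * {ffun 'I_k -> 'I_n}) :=
  [&& q.2.1 != q.2.2, WW.1 q.1.1 == WW.2 q.2.1 & WW.1 q.1.2 == WW.2 q.2.2].
apply: (leq_trans (@card_le_sum_card _ _ _ agree _)).
  move=> WW; rewrite inE => /and3P[_ _ pos_cov].
  have : share_edge g WW.1 WW.2.
    by apply: contraTT pos_cov => /(Cov_Wtilde_eq0 eps G) ->; rewrite ltxx.
  case/existsP=> i /existsP[j /existsP[i' /existsP[j' share]]].
  case/and5P: share => _ _ lt_ij' _ /andP[agree_i agree_j].
  by exists ((i, j), (i', j')); rewrite /agree /= agree_i agree_j neq_ltn lt_ij'.
have card_agree q : (#|agree q| <= n ^ (2 * k - 2))%N.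
  rewrite /agree; case: eqP => [_ | /eqP neq_ij'] /=; first by rewrite eq_card0.
  by rewrite card_ffun_pairs_agree2 // -expnD addnBA ?addnn ?mul2n.
apply: (@leq_trans (\sum_(q : ('I_k * 'I_k) * ('I_k * 'I_k)) n ^ (2 * k - 2))).
  by apply: leq_sum => q _; apply: card_agree.
by rewrite sum_nat_const !card_prod !card_ord !mulnn -expnM.
Qed.
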